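(* If $G$ is a graph and $m$ is a minimal $k$-precentral function for $G$, then $m^*(y)-m^*(z) \leq 1$ for all $y,z \in V(G)$.
   Context: Let $k\ge 2$ be an integer and $G$ a graph with $|E(G)|\equiv 0 \pmod{k}$. A $k$-precentral function for $G$ is a function $p: V(G)\to\mathbb{Z}_{\geq 0}$ with $\sum_{x\in V(G)} p(x)=\frac{1}{k}|E(G)|$. For such $p$, define $p^*(x)=p(x)-\frac{1}{2k}\deg_G(x)$ for each $x\in V(G)$. The function $p$ is proportional if $p(x)\in\{\lfloor \frac{1}{2k}\deg_G(x)\rfloor, \lceil \frac{1}{2k}\deg_G(x)\rceil\}$ for every $x\in V(G)$. A proportional $k$-precentral function $p$ is minimal if it minimises $\sum_{x\in V(G)}|p^*(x)|$ among all proportional $k$-precentral functions for $G$. *)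

From HB Require Import structures.
From mathcomp Require Import all_boot all_order all_algebra.
Set Implicit Arguments. Unset Strict Implicit. Unset Printing Implicit Defensive.
Import Order.TTheory GRing.Theory Num.Theory.

(* A finite simple graph on vertex set T: adjacency relation e, assumed
   symmetric and irreflexive (hypotheses of the theorem). *)
Section Graph.
Variables (T : finType) (e : rel T).

Definition deg (x : T) : nat := #|[set y | e x y]|.

Definition edges : {set {set T}} :=
  [set E : {set T} | [exists x, exists y, e x y && (E == [set x; y])]].

Definition nedges : nat := #|edges|.

(* k-precentral: sum of p equals |E(G)|/k (k divides |E(G)| by hypothesis) *)
Definition precentral (k : nat) (p : T -> nat) : Prop :=
  \sum_(x : T) p x = nedges %/ k.

Definition pstar (k : nat) (p : T -> nat) (x : T) : rat :=
  ((p x)%:R - (deg x)%:R / (2 * k)%:R)%R.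

Definition floor_deg (k : nat) (x : T) : nat := deg x %/ (2 * k).
Definition ceil_deg (k : nat) (x : T) : nat := (deg x + (2 * k).-1) %/ (2 * k).

Definition proportional (k : nat) (p : T -> nat) : Prop :=
  forall x, p x = floor_deg k x \/ p x = ceil_deg k x.

Definition total_dev (k : nat) (p : T -> nat) : rat :=
  (\sum_(x : T) `|pstar k p x|)%R.

Definition minimal_precentral (k : nat) (m : T -> nat) : Prop :=
  [/\ precentral k m, proportional k m &
      forall q : T -> nat, precentral k q -> proportional k q ->
        (total_dev k m <= total_dev k q)%R].
End Graph.

From mathcomp Require Import all_boot all_order all_algebra.
Import Order.TTheory GRing.Theory Num.Theory.
From mathcomp Require Import zify ring lra.

(* Proportionality forces |m*(x)| < 1 at every vertex.  So if m*(y) - m*(z) > 1,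
   then m*(y) > 0 > m*(z), hence m(y) = floor(deg y / 2k) + 1 and
   m(z) + 1 = ceil(deg z / 2k).  Moving one unit of m from y to z therefore
   keeps m proportional and precentral, while it changes the total deviation
   by 2 (1 - (m*(y) - m*(z))) < 0, contradicting minimality. *)

Set Implicit Arguments.
Unset Strict Implicit.
Unset Printing Implicit Defensive.

Lemma bigD2 {R : Type} {idx : R} {op : Monoid.com_law idx} {I : finType}
    {y z : I} (F : I -> R) : y != z ->
  \big[op/idx]_i F i =
    op (op (F y) (F z)) (\big[op/idx]_(i | (i != y) && (i != z)) F i).
Proof.
move=> yz; rewrite (bigD1 y) // (bigD1 z) /=; last by rewrite eq_sym.
by rewrite Monoid.mulmA; congr (op _ _); apply: eq_bigl => i; rewrite andbC.
Qed.

Section Transfer.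
Variable T : finType.
Implicit Types (p : T -> nat) (x y z : T).

Definition transfer p y z : T -> nat :=
  fun x => if x == y then (p y).-1 else if x == z then (p z).+1 else p x.

Lemma transfer_src p y z : transfer p y z y = (p y).-1.
Proof. by rewrite /transfer eqxx. Qed.

Lemma transfer_dst p y z : y != z -> transfer p y z z = (p z).+1.
Proof. by rewrite /transfer eq_sym => /negbTE ->; rewrite eqxx. Qed.

Lemma transfer_off p y z x : x != y -> x != z -> transfer p y z x = p x.
Proof. by rewrite /transfer => /negbTE -> /negbTE ->. Qed.

Lemma sum_transfer p y z : y != z -> 0 < p y ->
  \sum_x transfer p y z x = \sum_x p x.
Proof.
move=> yz py_gt0; rewrite !(bigD2 _ yz) /= transfer_src transfer_dst //.
congr (_ + _); first by rewrite addnS -addSn prednK.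
by apply: eq_bigr => x /andP[xy xz]; rewrite transfer_off.
Qed.

End Transfer.

Local Open Scope ring_scope.

Section Proportional.
Variables (T : finType) (e : rel T) (k : nat).
Hypothesis k_gt0 : (0 < k)%N.
Let k2_gt0 : (0 < 2 * k)%N. Proof. by rewrite muln_gt0. Qed.
Implicit Types (p : T -> nat) (x y z : T).

Definition deg_share x : rat := (deg e x)%:R / (2 * k)%:R.

Lemma pstarE p x : pstar e k p x = (p x)%:R - deg_share x.
Proof. by []. Qed.

Lemma floor_deg_bounds x :
  (floor_deg e k x)%:R <= deg_share x < (floor_deg e k x)%:R + 1.
Proof.
rewrite /deg_share /floor_deg ler_pdivlMr ?ltr_pdivrMr ?ltr0n //.
by rewrite -natrM ler_nat leq_divM natr1 -natrM ltr_nat ltn_ceil.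
Qed.

Lemma ceil_deg_bounds x :
  deg_share x <= (ceil_deg e k x)%:R < deg_share x + 1.
Proof.
rewrite /deg_share /ceil_deg ler_pdivrMr ?ltr0n //.
rewrite -ltrBlDr ltr_pdivlMr ?ltr0n //.
rewrite mulrBl mul1r ltrBlDr -!natrM -natrD ler_nat ltr_nat.
apply/andP; split; lia.
Qed.

Lemma ceil_deg_le_floor_deg_succ x : (ceil_deg e k x <= (floor_deg e k x).+1)%N.
Proof.
have := leq_divDl (2 * k) (deg e x) (2 * k).-1.
by rewrite (@divn_small (2 * k).-1) ?prednK // addn0 addn1.
Qed.

Lemma pstar_proportional_bounds p x :
  proportional e k p -> -1 < pstar e k p x < 1.
Proof.
have /andP[fl fu] := floor_deg_bounds x; have /andP[cl cu] := ceil_deg_bounds x.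
by rewrite pstarE => /(_ x) [] ->; apply/andP; split; lra.
Qed.

Lemma pstar_gt0_floor_deg p x : proportional e k p -> 0 < pstar e k p x ->
  p x = (floor_deg e k x).+1.
Proof.
have /andP[fl fu] := floor_deg_bounds x; have /andP[cl cu] := ceil_deg_bounds x.
rewrite pstarE => /(_ x) [] -> px_gt0; first by exfalso; lra.
apply/eqP; rewrite eqn_leq ceil_deg_le_floor_deg_succ -(ltr_nat rat); lra.
Qed.

Lemma pstar_lt0_ceil_deg p x : proportional e k p -> pstar e k p x < 0 ->
  (p x).+1 = ceil_deg e k x.
Proof.
have /andP[fl fu] := floor_deg_bounds x; have /andP[cl cu] := ceil_deg_bounds x.
rewrite pstarE => /(_ x) [] -> px_lt0; last by exfalso; lra.
apply/eqP; rewrite eqn_leq ceil_deg_le_floor_deg_succ andbT -(ltr_nat rat); lra.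
Qed.

Section UnitTransfer.
Variables (p : T -> nat) (y z : T).
Hypotheses (p_prop : proportional e k p)
  (py_gt0 : 0 < pstar e k p y) (pz_lt0 : pstar e k p z < 0).

Let yz : y != z.
Proof. by apply: contraTneq py_gt0 => ->; rewrite -leNgt (ltW pz_lt0). Qed.

Let py_floor : p y = (floor_deg e k y).+1 := pstar_gt0_floor_deg p_prop py_gt0.
Let pz_ceil : (p z).+1 = ceil_deg e k z := pstar_lt0_ceil_deg p_prop pz_lt0.

Lemma precentral_transfer : precentral e k p -> precentral e k (transfer p y z).
Proof. by rewrite /precentral sum_transfer // py_floor. Qed.

Lemma proportional_transfer : proportional e k (transfer p y z).
Proof.
move=> x; have [->|xy] := eqVneq x y.
  by left; rewrite transfer_src py_floor.
have [->|xz] := eqVneq x z; first by right; rewrite transfer_dst // pz_ceil.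
by rewrite transfer_off //; apply: p_prop.
Qed.

Lemma total_dev_transfer : total_dev e k (transfer p y z) =
  total_dev e k p + 2 * (1 - (pstar e k p y - pstar e k p z)).
Proof.
have /andP[_ py_lt1] := pstar_proportional_bounds y p_prop.
have /andP[pz_gtN1 _] := pstar_proportional_bounds z p_prop.
have ty : pstar e k (transfer p y z) y = pstar e k p y - 1.
  by rewrite !pstarE transfer_src py_floor -natr1; ring.
have tz : pstar e k (transfer p y z) z = pstar e k p z + 1.
  by rewrite !pstarE transfer_dst // -natr1; ring.
rewrite /total_dev !(bigD2 _ yz) /= ty tz.
rewrite (eq_bigr (fun x => `|pstar e k p x|)) => [|x /andP[xy xz]]; last first.
  by rewrite !pstarE transfer_off.
rewrite (gtr0_norm py_gt0) (ltr0_norm pz_lt0) ler0_norm ?ger0_norm; lra.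
Qed.

End UnitTransfer.
End Proportional.

Local Close Scope ring_scope.

Theorem lemma14 (T : finType) (e : rel T) (k : nat) (m : T -> nat) :
  symmetric e -> irreflexive e -> 2 <= k -> k %| nedges e ->
  minimal_precentral e k m ->
  forall y z : T, (pstar e k m y - pstar e k m z <= 1)%R.
Proof.
move=> _ _ k_ge2 _ [m_pre m_prop m_min] y z.
have k_gt0 : 0 < k by apply: leq_trans k_ge2.
rewrite leNgt; apply/negP => gap.
have /andP[_ my_lt1] := pstar_proportional_bounds k_gt0 y m_prop.
have /andP[mz_gtN1 _] := pstar_proportional_bounds k_gt0 z m_prop.
have my_gt0 : (0 < pstar e k m y)%R by lra.
have mz_lt0 : (pstar e k m z < 0)%R by lra.
have := m_min _ (precentral_transfer k_gt0 m_prop my_gt0 mz_lt0 m_pre)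
  (proportional_transfer k_gt0 m_prop my_gt0 mz_lt0).
rewrite total_dev_transfer //; lra.
Qed.
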